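(* Consider a convex compact visibility representation of a graph $G$, and let $A$ and $B$ be two of its regions that are mutually visible (so $AB$ is an edge of $G$). If some region other than $A$ and $B$ intersects some line segment joining a point of $A$ to a point of $B$, then the edge $AB$ lies in a triangle ($K_3$) of $G$.
   Context: All graphs are finite and simple. Given a family of pairwise disjoint nonempty connected subsets (''regions'') of $\mathbb{R}^2$, a sightline is a closed line segment $\overline{ab}$ with $a\in A$, $b\in B$ for two different regions $A\neq B$ of the family, such that the segment intersects no region of the family other than $A$ and $B$; two regions are mutually visible if there is a sightline between them. A visibility representation of a graph $G$ is such a family with one region per vertex, such that two distinct vertices are adjacent in $G$ if and only if their regions are mutually visible. A convex compact visibility representation is one in which every region is compact and convex. Vertices are identified with their regions. *)

From mathcomp Require Import all_boot all_order all_algebra.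
From mathcomp Require Import all_classical all_reals all_analysis.
Set Implicit Arguments. Unset Strict Implicit. Unset Printing Implicit Defensive.
Import Order.TTheory GRing.Theory Num.Theory.
Import numFieldNormedType.Exports.
Local Open Scope classical_set_scope.
Local Open Scope ring_scope.

Definition segment (R : realType) (a b : 'rV[R]_2) : set 'rV[R]_2 :=
  [set x | exists2 t : R, 0 <= t <= 1 & x = (1 - t) *: a + t *: b].

Definition convex_plane (R : realType) (S : set 'rV[R]_2) : Prop :=
  forall a b, S a -> S b -> segment a b `<=` S.

Definition sightline (R : realType) (V : finType) (F : V -> set 'rV[R]_2)
    (u v : V) (a b : 'rV[R]_2) : Prop :=
  [/\ u != v, F u a, F v b &
      forall w, w != u -> w != v -> segment a b `&` F w = set0].

Definition mutually_visible (R : realType) (V : finType)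
    (F : V -> set 'rV[R]_2) (u v : V) : Prop :=
  exists a b, sightline F u v a b.

Definition visibility_rep (R : realType) (V : finType) (e : rel V)
    (F : V -> set 'rV[R]_2) : Prop :=
  [/\ (forall v, F v !=set0),
      (forall v, connected (F v)),
      (forall u v, u != v -> F u `&` F v = set0) &
      (forall u v, u != v -> (e u v <-> mutually_visible F u v))].

Definition convex_compact_visibility_rep (R : realType) (V : finType)
    (e : rel V) (F : V -> set 'rV[R]_2) : Prop :=
  visibility_rep e F /\ (forall v, compact (F v) /\ convex_plane (F v)).

From mathcomp Require Import all_boot all_order all_algebra.
From mathcomp Require Import all_classical all_reals all_analysis.
From mathcomp Require Import ring lra.
Set Implicit Arguments. Unset Strict Implicit. Unset Printing Implicit Defensive.
Import Order.TTheory GRing.Theory Num.Theory.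
Import numFieldNormedType.Exports.
Local Open Scope classical_set_scope.
Local Open Scope ring_scope.

(* Fix a sightline [a0, b0] from A to B.  If [a1, b0] is blocked, look at the
   triangle with base [a0, a1] in A and apex b0 in B; otherwise look at the
   triangle with base [b0, b1] in B and apex a1 in A, whose side [b1, a1] is
   blocked by C.  In both cases one side from the base to the apex is free
   and the other is blocked.  Sweep the segments from the base to the apex,
   starting at the free one: by compactness there is a first segment that
   meets another region, and on it an obstacle point x nearest to the apex.
   The region D of x sees the apex along [x, apex], and sees the base from a
   slightly earlier base point, since the compact region of the apex stays
   away from the segments close to the obstacle.  So D is a common
   neighbour of A and B. *)

Section PlaneExtrema.
Variable R : realType.
Implicit Types K : set (R * R).

Lemma fst_continuous : continuous (fun z : R * R => z.1).
Proof. by move=> z; exact: cvg_fst. Qed.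

Lemma snd_continuous : continuous (fun z : R * R => z.2).
Proof. by move=> z; exact: cvg_snd. Qed.

Lemma compact_rectangle_preimage (T : topologicalType) (f : R * R -> T)
    (S : set T) (a b c d : R) :
  continuous f -> closed S -> compact ((`[a, b] `*` `[c, d]) `&` f @^-1` S).
Proof.
move=> cf cS; apply: compact_closedI.
  by apply: compact_setX; exact: segment_compact.
by apply: preimage_closed => // z _; exact: cf.
Qed.

Lemma compact_argmin K (f : R * R -> R) : K !=set0 -> compact K -> continuous f ->
  exists2 z, K z & forall y, K y -> f z <= f y.
Proof.
move=> K0 cK cf.
have [z Kz z_min] := compact_EVT_min K0 cK (continuous_subspaceT cf).
by exists z; [rewrite inE in Kz | move=> y Ky; apply: z_min; rewrite inE].
Qed.

Lemma compact_argmax K (f : R * R -> R) : K !=set0 -> compact K -> continuous f ->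
  exists2 z, K z & forall y, K y -> f y <= f z.
Proof.
move=> K0 cK cf.
have [z Kz z_max] := compact_EVT_max K0 cK (continuous_subspaceT cf).
by exists z; [rewrite inE in Kz | move=> y Ky; apply: z_max; rewrite inE].
Qed.

Lemma compact_lex_extremum K : K !=set0 -> compact K ->
  exists2 z, K z & forall y, K y -> z.1 <= y.1 /\ (y.1 = z.1 -> y.2 <= z.2).
Proof.
move=> K0 cK; have [c Kc c_min] := compact_argmin K0 cK fst_continuous.
pose K1 := K `&` (fun z : R * R => z.1) @^-1` [set c.1].
have cK1 : compact K1.
  apply: compact_closedI => //; apply: preimage_closed; last exact: closed_eq.
  by move=> z _; exact: fst_continuous.
have K1c : K1 c by [].
have [z [Kz /= z1] z_max] := compact_argmax (ex_intro _ c K1c) cK1 snd_continuous.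
exists z => // y Ky; rewrite z1; split; first exact: c_min.
by move=> y1; apply: z_max.
Qed.

Lemma compact_vertical_gap K b : compact K -> 0 < b ->
  (forall z, K z -> 0 <= z.1 < b) ->
  exists t, [/\ 0 <= t, t < b & forall s, ~ K (t, s)].
Proof.
move=> cK b_gt0 K_strip; have [K0|K0] := pselect (K !=set0); last first.
  by exists 0; split => // s Ks; apply: K0; exists (0, s).
have [m Km m_max] := compact_argmax K0 cK fst_continuous.
have /andP[m_ge0 m_ltb] := K_strip m Km.
exists ((m.1 + b) / 2); split; [lra | lra | move=> s Ks].
by have := m_max _ Ks; rewrite /=; lra.
Qed.

End PlaneExtrema.

Section Lerp.
Variable R : realType.
Implicit Types (a b p : 'rV[R]_2) (S : set 'rV[R]_2).

Definition lerp a b (t : R) : 'rV[R]_2 := (1 - t) *: a + t *: b.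

Lemma lerp0 a b : lerp a b 0 = a.
Proof. by rewrite /lerp subr0 scale1r scale0r addr0. Qed.

Lemma lerp1 a b : lerp a b 1 = b.
Proof. by rewrite /lerp subrr scale0r add0r scale1r. Qed.

Lemma lerp_lerp a b s1 s2 m :
  lerp (lerp a b s1) (lerp a b s2) m = lerp a b ((1 - m) * s1 + m * s2).
Proof. by apply/rowP => i; rewrite !mxE; ring. Qed.

Lemma lerp_lerpl a b s m : lerp a (lerp a b s) m = lerp a b (m * s).
Proof. by apply/rowP => i; rewrite !mxE; ring. Qed.

Lemma lerp_lerpr a b s m : lerp (lerp a b s) b m = lerp a b ((1 - m) * s + m).
Proof. by apply/rowP => i; rewrite !mxE; ring. Qed.

Lemma segment_sym a b : segment a b = segment b a.
Proof.
suff sub a' b' : segment a' b' `<=` segment b' a'.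
  by apply/seteqP; split; apply: sub.
move=> _ [t t01 ->]; exists (1 - t); first lra.
by apply/rowP => i; rewrite !mxE; ring.
Qed.

Lemma convex_lerp S a b t :
  convex_plane S -> S a -> S b -> 0 <= t <= 1 -> S (lerp a b t).
Proof. by move=> convS Sa Sb t01; apply: (convS a b) => //; exists t. Qed.

Lemma convex_lerp_between S a b s1 s2 r :
  convex_plane S -> S (lerp a b s1) -> S (lerp a b s2) -> s1 <= r <= s2 ->
  S (lerp a b r).
Proof.
move=> convS S1 S2 /andP[s1r rs2].
have [e12|s12] := eqVneq s1 s2; first by have -> : r = s1 by lra.
have s12' : s1 < s2 by rewrite lt_neqAle s12 (le_trans s1r).
have -> : lerp a b r = lerp (lerp a b s1) (lerp a b s2) ((r - s1) / (s2 - s1)).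
  by rewrite lerp_lerp; congr lerp; field; rewrite subr_eq0 eq_sym.
apply: convex_lerp => //; apply/andP; split; first by apply: divr_ge0; lra.
by rewrite ler_pdivrMr ?subr_gt0 // mul1r; lra.
Qed.

Lemma continuous_lerp (T : topologicalType) (f g : T -> 'rV[R]_2) (h : T -> R) :
  continuous f -> continuous g -> continuous h ->
  continuous (fun z => lerp (f z) (g z) (h z)).
Proof.
move=> cf cg ch z.
apply: (@continuousD _ _ _ (fun z => (1 - h z) *: f z) (fun z => h z *: g z)).
- apply: continuousZ; last exact: cf.
  by apply: cvgB; [exact: cvg_cst | exact: ch].
- by apply: continuousZ; [exact: ch | exact: cg].
Qed.

Definition fan (q0 q1 : 'rV[R]_2) p (z : R * R) : 'rV[R]_2 :=
  lerp (lerp q0 q1 z.1) p z.2.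

Lemma fan_continuous (q0 q1 : 'rV[R]_2) p : continuous (fan q0 q1 p).
Proof.
have cst_cont (a : 'rV[R]_2) : continuous (fun _ : R * R => a).
  exact: cst_continuous.
apply: continuous_lerp; [|exact: cst_cont|exact: snd_continuous].
by apply: continuous_lerp; [exact: cst_cont|exact: cst_cont|exact: fst_continuous].
Qed.

Lemma lerp_fan (q0 q1 : 'rV[R]_2) p t ts sk l : l * sk != 1 ->
  lerp (lerp q0 q1 t) (fan q0 q1 p (ts, sk)) l =
  fan q0 q1 p (((1 - l) * t + l * (1 - sk) * ts) / (1 - l * sk), l * sk).
Proof.
move=> lsk1; rewrite /fan /=; apply/rowP => i; rewrite !mxE; field.
by rewrite subr_eq0 eq_sym.
Qed.

End Lerp.

Section Fan.
Variables (R : realType) (V : finType) (F : V -> set 'rV[R]_2).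
Hypothesis F_closed : forall v, closed (F v).
Hypothesis F_convex : forall v, convex_plane (F v).
Hypothesis F_disjoint : forall u v, u != v -> F u `&` F v = set0.

Lemma regions_disjoint u v y : u != v -> F u y -> F v y -> False.
Proof. by move=> /F_disjoint/seteqP[/(_ y) + _] Fuy Fvy; apply. Qed.

Lemma mutually_visible_sym u v : mutually_visible F u v -> mutually_visible F v u.
Proof.
move=> [a [b [uv Fua Fvb free]]]; exists b, a; split => //; first by rewrite eq_sym.
by move=> w wv wu; rewrite segment_sym; exact: free.
Qed.

Variables (X Y : V) (q0 q1 p : 'rV[R]_2).
Hypotheses (Xq0 : F X q0) (Xq1 : F X q1) (Yp : F Y p).

Let G := fan q0 q1 p.

Let X_base t : 0 <= t <= 1 -> F X (lerp q0 q1 t).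
Proof. exact: convex_lerp. Qed.

Section Obstacle.
(* The point [G (ts, sk)] of the region [D] is met first when [t] increases
   from 0, and is then the obstacle on [[lerp q0 q1 ts, p]] nearest to [p]. *)
Variables (ts sk : R) (D : V).
Hypotheses (DX : D != X) (DY : D != Y) (D_obstacle : F D (G (ts, sk))).
Hypothesis G_extremal : forall t s w, 0 <= t <= 1 -> 0 <= s <= 1 ->
  w != X -> w != Y -> F w (G (t, s)) -> ts <= t /\ (t = ts -> s <= sk).

Lemma obstacle_visible_apex : 0 <= ts <= 1 -> 0 <= sk < 1 -> mutually_visible F D Y.
Proof.
move=> ts01 /andP[sk_ge0 sk_lt1].
exists (G (ts, sk)), p; split => // w wD wY.
apply/seteqP; split => // _ [[m /andP[m_ge0 m_le1] ->] Fwy].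
have {Fwy} Fw : F w (lerp (lerp q0 q1 ts) p ((1 - m) * sk + m)).
  by rewrite -lerp_lerpr.
have s_bounds : sk <= (1 - m) * sk + m <= 1 by apply/andP; split; nra.
have [wX|wX] := eqVneq w X.
  apply: (regions_disjoint DX D_obstacle); rewrite -wX /G /fan /=.
  apply: (convex_lerp_between (@F_convex w) _ Fw (s1 := 0)); last lra.
  by rewrite lerp0 wX; exact: X_base.
have s01 : 0 <= (1 - m) * sk + m <= 1 by lra.
have [_ /(_ erefl) s_lesk] := G_extremal ts01 s01 wX wY Fw.
have sk_eq : (1 - m) * sk + m = sk by lra.
by rewrite sk_eq in Fw; exact: (regions_disjoint wD Fw).
Qed.

Lemma base_visible_obstacle : 0 < ts <= 1 -> 0 <= sk < 1 -> mutually_visible F X D.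
Proof.
move=> /andP[ts_gt0 ts_le1] /andP[sk_ge0 sk_lt1].
pose x := G (ts, sk).
have Y_off_ray s : 0 <= s <= 1 -> ~ F Y (fan q0 q1 x (ts, s)).
  move=> s01 Ys; apply: (regions_disjoint DY D_obstacle).
  rewrite /fan /x /G /= lerp_lerpl /= in Ys.
  apply: (convex_lerp_between (@F_convex Y) Ys (s2 := 1)); first by rewrite lerp1.
  by case/andP: s01 => ? ?; apply/andP; split => /=; nra.
pose K := (`[0, ts] `*` `[0, 1]) `&` fan q0 q1 x @^-1` F Y.
have [t [t_ge0 t_lt Y_off]] : exists t, [/\ 0 <= t, t < ts & forall s, ~ K (t, s)].
  apply: compact_vertical_gap => //.
    by apply: compact_rectangle_preimage; [exact: fan_continuous | exact: F_closed].
  move=> [t s] [[/=]]; rewrite !in_itv /= => /andP[t_ge0 t_le] s01 Yts.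
  rewrite t_ge0 lt_neqAle t_le andbT.
  by apply: contra_notN (Y_off_ray s s01) => /eqP <-.
exists (lerp q0 q1 t), x; split; first by rewrite eq_sym.
- by apply: X_base; lra.
- exact: D_obstacle.
move=> w wX wD; apply/seteqP; split => // _ [[l l01 ->] Fwy].
have {Fwy} Fw : F w (lerp (lerp q0 q1 t) x l) by [].
have [wY|wY] := eqVneq w Y.
  by apply: (Y_off l); split; [rewrite /= !in_itv /=; lra | rewrite -wY].
have [l1|l_neq1] := eqVneq l 1.
  by rewrite l1 lerp1 in Fw; exact: (regions_disjoint wD Fw).
have l_lt1 : l < 1 by rewrite lt_neqAle l_neq1; case/andP: l01.
have lsk_lt1 : l * sk < 1 by case/andP: l01 => ? ?; nra.
rewrite /x lerp_fan ?lt_eqF // in Fw.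
set t' := _ / _ in Fw.
have t'_lt : t' < ts.
  rewrite ltr_pdivrMr ?subr_gt0 //.
  have : 0 < (1 - l) * (ts - t) by apply: mulr_gt0; lra.
  nra.
have t'_ge0 : 0 <= t'.
  apply: divr_ge0; last lra.
  case/andP: l01 => ? ?; apply: addr_ge0; apply: mulr_ge0; nra.
have t'01 : 0 <= t' <= 1 by lra.
have lsk01 : 0 <= l * sk <= 1 by case/andP: l01 => ? ?; apply/andP; split; nra.
by have [] := G_extremal t'01 lsk01 wX wY Fw; lra.
Qed.

End Obstacle.

Lemma fan_obstacle_visible :
  (forall w, w != X -> w != Y -> segment q0 p `&` F w = set0) ->
  (exists w, [/\ w != X, w != Y & segment q1 p `&` F w !=set0]) ->
  exists D, [/\ D != X, D != Y, mutually_visible F X D & mutually_visible F D Y].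
Proof.
move=> q0p_free [w1 [w1X w1Y [_ [[s1 s1_01 ->] Fw1]]]].
pose U := \bigcup_(w in [set w | w != X /\ w != Y]) F w.
have U_closed : closed U.
  by apply: closed_bigcup => [|w _]; [exact: finite_finset | exact: F_closed].
pose Z := (`[0, 1] `*` `[0, 1]) `&` G @^-1` U.
have Z0 : Z !=set0.
  exists (1, s1); split; first by split; rewrite /= in_itv /=; lra.
  by exists w1 => //; rewrite /G /fan /= lerp1.
have Z_compact : compact Z.
  by apply: compact_rectangle_preimage => //; exact: fan_continuous.
have [[ts sk] [[/=]]] := compact_lex_extremum Z0 Z_compact.
rewrite !in_itv /= => ts01 sk01 [D /= [DX DY] FD] Z_extremal.
have G_extremal t s w : 0 <= t <= 1 -> 0 <= s <= 1 -> w != X -> w != Y ->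
    F w (G (t, s)) -> ts <= t /\ (t = ts -> s <= sk).
  move=> t01 s01 wX wY Fw; apply: (Z_extremal (t, s)).
  by split; [split; rewrite /= in_itv | exists w].
have ts_gt0 : 0 < ts.
  rewrite lt_neqAle eq_sym; case/andP: ts01 => -> _; rewrite andbT.
  apply/eqP => ts0; have /seteqP[/(_ (G (ts, sk))) q0p_D _] := q0p_free D DX DY.
  by apply: q0p_D; split => //; exists sk => //; rewrite /G /fan /= ts0 lerp0.
have sk_lt1 : sk < 1.
  rewrite lt_neqAle; case/andP: sk01 => _ ->; rewrite andbT.
  apply/eqP => sk1; apply: (regions_disjoint DY FD).
  by rewrite /G /fan /= sk1 lerp1.
exists D; split => //.
  by apply: (base_visible_obstacle (ts := ts) (sk := sk)) => //; lra.
by apply: (obstacle_visible_apex (ts := ts) (sk := sk)) => //; lra.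
Qed.

End Fan.

Theorem lemma1 (R : realType) (V : finType) (e : rel V)
    (F : V -> set 'rV[R]_2) :
  symmetric e -> irreflexive e ->
  convex_compact_visibility_rep e F ->
  forall A B : V, e A B ->
  (exists (C : V) (a b : 'rV[R]_2),
      [/\ C != A, C != B, F A a, F B b & segment a b `&` F C !=set0]) ->
  exists D : V, e A D && e B D.
Proof.
move=> e_sym e_irr [[_ _ F_disjoint F_visible] F_cc] A B eAB
  [C [a1 [b1 [CA CB Aa1 Bb1 C_blocks]]]].
have F_closed v : closed (F v).
  by apply: compact_closed; [exact: norm_hausdorff | exact: (F_cc v).1].
have F_convex v : convex_plane (F v) by exact: (F_cc v).2.
have AB : A != B by apply: contraTneq eAB => ->; rewrite e_irr.
have [a0 [b0 [_ Aa0 Bb0 a0b0_free]]] := (F_visible A B AB).1 eAB.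
have edge u v : u != v -> mutually_visible F u v -> e u v.
  by move=> uv; case: (F_visible u v uv).
suff [D [DA DB vis_AD vis_DB]] : exists D,
    [/\ D != A, D != B, mutually_visible F A D & mutually_visible F D B].
  by exists D; rewrite edge 1?eq_sym // e_sym edge.
have [a1b0_blocked|a1b0_free] :=
  pselect (exists w, [/\ w != A, w != B & segment a1 b0 `&` F w !=set0]).
  exact: (fan_obstacle_visible F_closed F_convex F_disjoint Aa0 Aa1 Bb0).
have b0a1_free w : w != B -> w != A -> segment b0 a1 `&` F w = set0.
  move=> wB wA; rewrite segment_sym; apply/seteqP; split => // y a1b0_y.
  by apply: a1b0_free; exists w; split => //; exists y.
have b1a1_blocked : exists w, [/\ w != B, w != A & segment b1 a1 `&` F w !=set0].
  case: C_blocks => c [ab_c Cc]; exists C; split => //.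
  by exists c; rewrite -segment_sym.
have [D [DB DA vis_BD vis_DA]] :=
  fan_obstacle_visible F_closed F_convex F_disjoint Bb0 Bb1 Aa1
    b0a1_free b1a1_blocked.
by exists D; split => //; exact: mutually_visible_sym.
Qed.
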